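(* Let $n$ be a power of $2$, and let $\mathcal{M}_{K_n}$ be a circular self-dual orientable embedding of $K_n$. Let $Y=K_n^\phi$ be the double cover of $K_n$ in which $\phi$ sends every arc to the non-identity element of the group of order $2$, and let $\mathcal{M}_Y$ be the associated voltage embedding. Then the $H$-digraph of $\mathcal{M}_Y$ is an oriented graph.
   Context: Setting. A circular embedding is a cellular embedding in which every face is bounded by a cycle. It is self-dual if it is isomorphic to its dual embedding. Double cover. For a group $\Gamma$ of order $r$ and a map $\phi$ from arcs to $\Gamma$ with $\phi(v,u)=\phi(u,v)^{-1}$, the graph $X^\phi$ has vertex set $V(X)\times\Gamma$, with $(u,g)\sim(v,g\phi(u,v))$. The covering map is $\psi(u,g)=u$. The voltage embedding has as facial walks the closed walks into which the $\psi$-preimages of the consistently oriented facial walks of the base embedding decompose. Vertex-face transition matrix. Fix a consistent orientation of the faces (each shared edge gets opposite directions), so each arc lies in one facial walk. Let $M$ be the arc-face incidence matrix and $N$ the arc-tail incidence matrix, and $\widehat M,\widehat N$ these with columns scaled to unit length. Then $U=(2\widehat M\widehat M^T-I)(2\widehat N\widehat N^T-I)$. $H$-digraph. The principal Hamiltonian of a unitary $V=\sum\alpha_rF_r$ (spectral decomposition) is $-i\sum\log(\alpha_r)F_r$, with $-\pi<-i\log\alpha_r\le\pi$. The $H$-digraph is the weighted digraph on the arcs whose weighted adjacency matrix is the principal Hamiltonian $H$ of $U^2$; it is always a weighted oriented graph. It is said to be an oriented graph if it is unweighted up to scaling, i.e. $iH$ is a real multiple of the skew-adjacency matrix of an oriented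 graph. *)

From HB Require Import structures.
From mathcomp Require Import all_boot all_order all_fingroup all_algebra.
From mathcomp Require Import reals trigo.
From mathcomp Require Import complex.
Set Implicit Arguments.
Unset Strict Implicit.
Unset Printing Implicit Defensive.
Import Order.TTheory GRing.Theory Num.Theory.
Local Open Scope ring_scope.
Local Open Scope complex_scope.

(* The complete graph K_n: vertices 'I_n, arcs = ordered pairs (u,v), u<>v. *)
Notation arcK n := {p : 'I_n * 'I_n | p.1 != p.2}.

Definition tailK n (a : arcK n) : 'I_n := (val a).1.
Definition headK n (a : arcK n) : 'I_n := (val a).2.

Lemma rev_arc_subproof n (a : arcK n) : (val a).2 != (val a).1.
Proof. by rewrite eq_sym (valP a). Qed.

Definition rev_arc n (a : arcK n) : arcK n :=
  exist _ ((val a).2, (val a).1) (rev_arc_subproof a).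

(* An orientable embedding of K_n, given by its rotation system: a          *)
(* permutation rho of the arcs preserving tails and cyclically permuting    *)
(* (as one single cycle) the arcs leaving each vertex.                      *)
Definition rotation_system n (rho : {perm (arcK n)}) : Prop :=
  (forall a, tailK (rho a) = tailK a) /\
  (forall a b, tailK a = tailK b -> fconnect rho a b).

(* Consistently oriented facial walks: the successor of arc a=(u,v) in its  *)
(* facial walk is rho (v,u).  Faces are the cycles of this permutation.     *)
Definition face_succ n (rho : {perm (arcK n)}) (a : arcK n) : arcK n :=
  rho (rev_arc a).

Definition face_of (A : finType) (f : A -> A) (a : A) : {set A} :=
  [set b | fconnect f a b].

(* Circular: every facial walk is a cycle of K_n, i.e. it has length >= 3  *)
(* and visits pairwise distinct vertices.                                  *)
Definition circular n (rho : {perm (arcK n)}) : Prop :=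
  forall a : arcK n,
    (2 < #|face_of (face_succ rho) a|)%N /\
    {in face_of (face_succ rho) a &, injective (@tailK n)}.

(* Self-dual: the embedding (rho, rev_arc) is isomorphic, as a map, to its *)
(* dual map (face_succ rho, rev_arc); the isomorphism may preserve or       *)
(* reverse the orientation.                                                *)
Definition self_dual n (rho : {perm (arcK n)}) : Prop :=
  exists sigma : {perm (arcK n)},
    (forall a, sigma (rev_arc a) = rev_arc (sigma a)) /\
    ((forall a, sigma (rho a) = face_succ rho (sigma a)) \/
     (forall a, face_succ rho (sigma (rho a)) = sigma a)).

(* Z_2-voltage double cover K_n^vol (Z_2 = bool with xor, identity false). *)
Definition tailY n (x : arcK n * bool) : 'I_n * bool := (tailK x.1, x.2).
Definition headY n (vol : arcK n -> bool) (x : arcK n * bool) : 'I_n * bool :=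
  (headK x.1, x.2 (+) vol x.1).

(* The voltage embedding: the psi-preimage of the facial walk              *)
(* a_0 a_1 ... of the base embedding, started at the lift (a_0, g), is the  *)
(* walk (a_0,g) (a_1, g (+) vol a_0) ...; these preimages decompose into    *)
(* the cycles of the following permutation of the arcs of the cover.       *)
Definition voltage_face_succ n (rho : {perm (arcK n)}) (vol : arcK n -> bool)
  (x : arcK n * bool) : arcK n * bool :=
  (face_succ rho x.1, x.2 (+) vol x.1).

Definition vol_nonid n (a : arcK n) : bool := true.

(* arc-indexed matrices are indexed via enum_val : 'I_#|A| -> A.            *)
Section Transition.
Variables (R : realType) (A V : finType) (tl : A -> V) (f : A -> A).

Definition faces : {set {set A}} := [set face_of f a | a : A].

Definition arc_face_mx : 'M[R]_(#|A|, #|faces|) :=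
  \matrix_(i < #|A|, j < #|faces|) ((enum_val i \in enum_val j) : nat)%:R.

Definition arc_tail_mx : 'M[R]_(#|A|, #|V|) :=
  \matrix_(i < #|A|, j < #|V|) ((tl (enum_val i) == enum_val j) : nat)%:R.

Definition col_normalize m k (X : 'M[R]_(m, k)) : 'M[R]_(m, k) :=
  \matrix_(i, j) (X i j / Num.sqrt (\sum_(l < m) X l j ^+ 2)).

Definition transition_mx : 'M[R]_#|A| :=
  let Mh := col_normalize arc_face_mx in
  let Nh := col_normalize arc_tail_mx in
  ((2%:R *: (Mh *m Mh^T) - 1%:M) *m (2%:R *: (Nh *m Nh^T) - 1%:M)).

End Transition.

Section Hamiltonian.
Variable R : realType.
Local Notation C := R[i].

Definition expi (t : R) : C := (cos t)%:C + 'i * (sin t)%:C.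

(* H is the principal Hamiltonian of V: V = sum_r alpha_r F_r is the        *)
(* spectral decomposition of V (distinct eigenvalues alpha_r, orthogonal    *)
(* projections F_r, nonzero, pairwise orthogonal, summing to I), written    *)
(* alpha_r = exp(i t_r) with -pi < t_r <= pi, i.e. t_r = -i log alpha_r,    *)
(* and H = sum_r t_r F_r.                                                   *)
Definition principal_hamiltonian m (W H : 'M[C]_m) : Prop :=
  exists (p : nat) (t : 'I_p -> R) (F : 'I_p -> 'M[C]_m),
    injective t /\
    (forall r, - pi < t r <= pi) /\
    (forall r, F r != 0) /\
    (forall r i j, F r j i = (F r i j)^*) /\
    (forall r s, F r *m F s = if r == s then F r else 0) /\
    \sum_(r < p) F r = 1%:M /\
    W = \sum_(r < p) expi (t r) *: F r /\
    H = \sum_(r < p) (t r)%:C *: F r.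

Definition skew_adj_mx (A : finType) (D : rel A) : 'M[R]_#|A| :=
  \matrix_(i, j) (if D (enum_val i) (enum_val j) then 1
                  else if D (enum_val j) (enum_val i) then -1 else 0).

Definition oriented_graph (A : finType) (D : rel A) : Prop :=
  forall a b, D a b -> ~~ D b a.

(* the weighted digraph with adjacency matrix H is an oriented graph: iH is *)
(* a real multiple of the skew-adjacency matrix of an oriented graph.       *)
Definition is_oriented_graph_mx (A : finType) (H : 'M[C]_#|A|) : Prop :=
  exists (c : R) (D : rel A),
    oriented_graph D /\
    'i *: H = map_mx (fun x : R => x%:C) (c *: skew_adj_mx D).

End Hamiltonian.

Definition voltage_transition_mx (R : realType) n (rho : {perm (arcK n)})
  (vol : arcK n -> bool) : 'M[R[i]]_#|{: (arcK n) * bool}| :=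
  map_mx (fun x : R => x%:C)
    (transition_mx R (@tailY n) (voltage_face_succ rho vol)).

From HB Require Import structures.
From mathcomp Require Import all_boot all_order all_fingroup all_algebra.
From mathcomp Require Import reals trigo.
From mathcomp Require Import complex.
From mathcomp Require Import zify ring lra.

Set Implicit Arguments.
Unset Strict Implicit.
Unset Printing Implicit Defensive.

Import Order.TTheory GRing.Theory Num.Theory.
Local Open Scope ring_scope.
Local Open Scope complex_scope.

(* Self-duality makes every face of the base map a cycle with n - 1 arcs; for
   n = 2^k this length is odd, so each face lifts to a single face of length
   2(n - 1) in the cover.  Let P, Q and E be the orthogonal projections onto
   the functions on arcs of the cover that are constant on faces, on arcs with
   a common tail, and everywhere.  Then U = (2P - 1)(2Q - 1), and since two
   distinct faces of the base map share exactly n - 2 vertices, counting gives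
   PQP = aP + (1 - a)E with a = 1/(n - 1)^2.  For the real skew matrix
   K = PQ - QP this yields U^2 - U^-2 = (16a - 8)K, U^2 + U^-2 = 16K^2 + 2
   and K^3 = -a(1 - a)K.  On an eigenspace of U^2 with eigenvalue e^(it), K
   acts by some k with either k = 0 and t = 0, or k^2 = -a(1 - a) and
   cos t = 1 - 8a(1 - a); in both cases t is the same real multiple of -ik.
   Hence iH is a real multiple of K, a multiple of the skew-adjacency matrix of
   the oriented graph with x -> y iff the tail of y lies on the face of x but
   the tail of x does not lie on the face of y. *)

Section FaceOrbits.
Variables (T : finType) (f : T -> T).

Lemma mem_face_of x : x \in face_of f x.
Proof. by rewrite inE connect0. Qed.

Lemma face_of_in_faces x : face_of f x \in faces f.
Proof. exact: imset_f. Qed.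

Lemma face_of_conj (g s : T -> T) :
  (forall x, f (s x) = s (g x)) -> forall x, face_of f (s x) = s @: face_of g x.
Proof.
move=> fsE x; have iterE k : iter k f (s x) = s (iter k g x).
  by elim: k => //= k ->; rewrite fsE.
apply/setP => y; apply/idP/imsetP => [|[z]].
  rewrite inE => /iter_findex <-; rewrite iterE.
  by exists (iter (findex f (s x) y) g x); rewrite // inE fconnect_iter.
by rewrite inE => /iter_findex <- ->; rewrite inE -iterE fconnect_iter.
Qed.

Hypothesis injf : injective f.

Lemma face_of_eqE x y : (face_of f x == face_of f y) = (y \in face_of f x).
Proof.
apply/eqP/idP => [->|]; first exact: mem_face_of.
rewrite inE => xy; apply/setP => z.
by rewrite !inE (same_connect (fconnect_sym injf) xy).
Qed.

Lemma mem_faces Fs x : Fs \in faces f -> (x \in Fs) = (Fs == face_of f x).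
Proof. by case/imsetP => y _ ->; rewrite face_of_eqE. Qed.

Lemma sum_faces_mem (V : nmodType) x (g : {set T} -> V) :
  \sum_(Fs in faces f) (if x \in Fs then g Fs else 0) = g (face_of f x).
Proof.
rewrite (bigD1 (face_of f x)) ?face_of_in_faces //= mem_face_of big1 ?addr0 //.
by move=> Fs /andP[facesFs neFs]; rewrite (mem_faces _ facesFs) (negbTE neFs).
Qed.

Lemma sum_card_faces : (\sum_(Fs in faces f) #|Fs|)%N = #|T|.
Proof.
transitivity (\sum_(x : T) \sum_(Fs in faces f) (if x \in Fs then 1 else 0))%N.
  by rewrite exchange_big; apply: eq_bigr => Fs _; rewrite -big_mkcond sum1_card.
by rewrite -sum1_card; apply: eq_bigr => x _; rewrite sum_faces_mem.
Qed.

End FaceOrbits.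

Lemma fconnect_permV (T : finType) (s : {perm T}) : fconnect (s^-1)%g =2 fconnect s.
Proof.
move=> x y; rewrite -(same_fconnect_finv (@perm_inj _ s)).
apply: eq_connect => u v /=; congr (_ == v).
by apply: (@perm_inj _ s); rewrite permKV f_finv //; exact: perm_inj.
Qed.

Lemma face_of_permV (T : finType) (s : {perm T}) x : face_of (s^-1)%g x = face_of s x.
Proof. by apply/setP => y; rewrite !inE fconnect_permV. Qed.

Lemma rev_arcK n : involutive (@rev_arc n).
Proof. by move=> a; apply: val_inj; case: a => [[u v] uv]. Qed.

Lemma arcK_eq n (a b : arcK n) : tailK a = tailK b -> headK a = headK b -> a = b.
Proof.
move=> eq_tail eq_head; apply: val_inj.
by rewrite [val a]surjective_pairing [val b]surjective_pairing; congr pair.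
Qed.

Lemma card_arcs_from n (u : 'I_n) : #|[set b : arcK n | tailK b == u]| = n.-1.
Proof.
rewrite -(@card_in_imset _ _ (@headK n)); last first.
  move=> b c; rewrite !inE => /eqP bu /eqP cu; apply: arcK_eq.
  by rewrite bu cu.
have -> : (@headK n) @: [set b : arcK n | tailK b == u] = [set~ u].
  apply/setP => v; rewrite in_setC1; apply/imsetP/idP => [[b]|uv].
    by rewrite inE => /eqP <- ->; rewrite /headK /tailK eq_sym (valP b).
  have uv' : (u, v).1 != (u, v).2 by rewrite eq_sym.
  by exists (exist _ (u, v) uv'); rewrite ?inE.
by rewrite cardsC1 card_ord.
Qed.

Lemma card_arcK n : #|{: arcK n}| = (n * n.-1)%N.
Proof.
rewrite -sum1_card (partition_big (@tailK n) predT) //=.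
rewrite (eq_bigr (fun _ => n.-1)) ?sum_nat_const ?card_ord // => u _.
by rewrite -(card_arcs_from u) -sum1_card; apply: eq_bigl => b; rewrite inE.
Qed.

Section Embedding.
Variables (n : nat) (rho : {perm (arcK n)}).
Local Notation fs := (face_succ rho).
Local Notation F := (face_of (face_succ rho)).

Lemma face_succ_inj : injective fs.
Proof. by move=> a b /perm_inj /(can_inj (@rev_arcK n)). Qed.

Definition face_verts a : {set 'I_n} := (@tailK n) @: F a.

Hypothesis rot : rotation_system rho.

Lemma face_of_rotation a : face_of rho a = [set b | tailK b == tailK a].
Proof.
apply/setP => b; rewrite !inE; apply/idP/eqP => [|ab].
  by move/(fconnect_invariant (k := @tailK n)) => -> // c; rewrite /= rot.1 eqxx.
exact: rot.2.
Qed.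

Hypothesis self_dual_rho : self_dual rho.

Lemma self_dual_face_of :
  exists sigma : {perm arcK n},
    forall c, F (sigma c) = sigma @: [set b | tailK b == tailK c].
Proof.
case: self_dual_rho => sigma [_ [sigma_rho|sigma_rho]]; exists sigma => c.
  by rewrite (face_of_conj (fun x => esym (sigma_rho x))) face_of_rotation.
have fs_sigma x : fs (sigma x) = sigma ((rho^-1)%g x).
  by rewrite -{1}(permKV rho x) sigma_rho.
by rewrite (face_of_conj fs_sigma) face_of_permV face_of_rotation.
Qed.

Lemma card_face_of a : #|F a| = n.-1.
Proof.
have [sigma sigmaE] := self_dual_face_of.
rewrite -(permKV sigma a) sigmaE card_imset; last exact: perm_inj.
exact: card_arcs_from.
Qed.

Hypothesis circ : circular rho.

Lemma tailK_inj_face a : {in F a &, injective (@tailK n)}.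
Proof. by case: (circ a). Qed.

Lemma card_face_verts a : #|face_verts a| = n.-1.
Proof. by rewrite card_in_imset ?card_face_of //; exact: tailK_inj_face. Qed.

Lemma face_size_gt2 (a : arcK n) : (2 < n.-1)%N.
Proof. by rewrite -(card_face_of a); case: (circ a). Qed.

Lemma card_faces (a : arcK n) : #|faces fs| = n.
Proof.
have := sum_card_faces face_succ_inj; rewrite card_arcK.
rewrite (eq_bigr (fun _ => n.-1)) => [|_ /imsetP[b _ ->]]; last exact: card_face_of.
rewrite sum_nat_const => /eqP.
by rewrite eqn_pmul2r ?(ltn_trans _ (face_size_gt2 a)) // => /eqP.
Qed.

(* The n-1 arcs leaving a vertex v outside face_verts a lie in n-1 distinct
   faces; if face_verts a = face_verts b, these avoid F a and F b. *)
Lemma face_verts_neq a b : b \notin F a -> face_verts a != face_verts b.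
Proof.
move=> bFa; apply/negP => /eqP eqT.
have gt2 := face_size_gt2 a.
have [v _ vTa] : exists2 v, v \in [set: 'I_n] & v \notin face_verts a.
  apply/subsetPn; apply/negP => /subset_leq_card.
  by rewrite cardsT card_ord card_face_verts; lia.
pose S := [set c : arcK n | tailK c == v].
have cardFS : #|F @: S| = n.-1.
  rewrite card_in_imset ?card_arcs_from // => c c'.
  rewrite !inE => /eqP cv /eqP c'v Fcc'.
  apply: (@tailK_inj_face c); rewrite ?mem_face_of ?Fcc' ?mem_face_of //.
  by rewrite cv c'v.
have notFS x : v \notin face_verts x -> F x \notin F @: S.
  move=> vTx; apply/imsetP => [[c]]; rewrite inE => /eqP cv Fxc.
  by move/negP: vTx; apply; apply/imsetP; exists c; rewrite // Fxc mem_face_of.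
have FaFb : F a != F b by rewrite (face_of_eqE face_succ_inj).
have : (#|F a |: (F b |: (F @: S))| <= #|faces fs|)%N.
  apply/subset_leq_card/subsetP => G; rewrite !inE.
  case/or3P => [/eqP->|/eqP->|/imsetP[c _ ->]]; exact: face_of_in_faces.
rewrite !cardsU1 cardFS (card_faces a) !inE (negbTE FaFb) /= notFS //.
by rewrite notFS -?eqT //; lia.
Qed.

Lemma card_face_vertsI a b :
  #|face_verts a :&: face_verts b| = if b \in F a then n.-1 else n.-2.
Proof.
have gt2 := face_size_gt2 a.
case: ifP => bFa.
  have /eqP FaFb : F a == F b by rewrite (face_of_eqE face_succ_inj).
  by rewrite /face_verts FaFb setIid card_face_verts.
have neT := face_verts_neq (negbT bFa).
have cardU : #|face_verts a :|: face_verts b| = n.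
  apply/eqP; rewrite eqn_leq; apply/andP; split.
    by rewrite -[X in (_ <= X)%N](card_ord n) max_card.
  rewrite leqNgt; apply/negP => lt_n.
  have Ta_eq : face_verts a = face_verts a :|: face_verts b.
    by apply/eqP; rewrite eqEcard subsetUl card_face_verts; lia.
  move/negP: neT; apply; rewrite eq_sym eqEcard !card_face_verts leqnn andbT.
  by rewrite Ta_eq subsetUr.
by have := cardsUI (face_verts a) (face_verts b); rewrite cardU !card_face_verts; lia.
Qed.

Lemma card_face_arcs_from a v :
  #|[set b | (b \in F a) && (tailK b == v)]| = (v \in face_verts a).
Proof.
have [/imsetP[b0 b0F ->]|vT] := boolP (v \in face_verts a).
  transitivity #|[set b0]|; last by rewrite cards1.
  apply: eq_card => b; rewrite !inE.
  apply/andP/eqP => [[bF /eqP]|->]; last by rewrite inE in b0F.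
  by move=> tb; apply: (@tailK_inj_face a) tb; rewrite // inE.
apply/eqP; rewrite cards_eq0; apply/eqP/setP => b; rewrite !inE.
apply/negbTE/andP => -[bF /eqP bv]; move/negP: vT; apply; rewrite -bv.
by apply: imset_f; rewrite inE.
Qed.

Lemma card_face_arcs_from_verts a c :
  #|[set b | (tailK b \in face_verts a) && (b \in F c)]| =
  #|face_verts a :&: face_verts c|.
Proof.
rewrite -(@card_in_imset _ _ (@tailK n)) => [|b b']; last first.
  rewrite !inE => /andP[_ bF] /andP[_ b'F].
  by apply: (@tailK_inj_face c); rewrite inE.
apply: eq_card => v; rewrite in_setI.
apply/imsetP/andP => [[b]|[vTa /imsetP[b bF vE]]].
  by rewrite inE => /andP[bTa bF] ->; split; last exact: imset_f.
by exists b; rewrite // inE -vE vTa.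
Qed.

End Embedding.

Lemma card_pred_fst (T : finType) (P : pred T) :
  #|[set z : T * bool | P z.1]| = (2 * #|[set b | P b]|)%N.
Proof.
have -> : [set z : T * bool | P z.1] = setX [set b | P b] [set: bool].
  by apply/setP => z; rewrite !inE andbT.
by rewrite cardsX cardsT card_bool mulnC.
Qed.

Lemma card_pred_fst_snd (T : finType) (P : pred T) (g : bool) :
  #|[set z : T * bool | P z.1 && (z.2 == g)]| = #|[set b | P b]|.
Proof.
have -> : [set z : T * bool | P z.1 && (z.2 == g)] = setX [set b | P b] [set g].
  by apply/setP => z; rewrite !inE.
by rewrite cardsX cards1 muln1.
Qed.

Section SheetFlip.
Variables (T : finType) (f : T -> T) (g : T * bool -> T * bool).
Hypotheses (injf : injective f) (gE : forall x, g x = (f x.1, ~~ x.2)).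

Lemma sheet_flip_inj : injective g.
Proof. by move=> [x b] [y c]; rewrite !gE => -[/injf-> /negb_inj->]. Qed.

Lemma iter_sheet_flip k x : iter k g x = (iter k f x.1, x.2 (+) odd k).
Proof.
elim: k => [|k IHk]; first by rewrite addbF -surjective_pairing.
by rewrite iterS IHk gE /= addbN.
Qed.

Lemma face_of_sheet_flip x :
  odd #|face_of f x.1| -> face_of g x = [set y | y.1 \in face_of f x.1].
Proof.
move=> odd_face; apply/setP => y; rewrite inE; apply/idP/idP.
  by rewrite inE => /iter_findex <-; rewrite iter_sheet_flip inE fconnect_iter.
rewrite inE => /iter_findex; set k := findex _ _ _ => y1E.
have orderE : fingraph.order f x.1 = #|face_of f x.1|.
  by apply: eq_card => z; rewrite !inE.
suff [j ->] : exists j, y = iter j g x by rewrite inE fconnect_iter.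
have [/eqP y2E|y2N] := boolP (y.2 == x.2 (+) odd k).
  by exists k; rewrite iter_sheet_flip y1E -y2E -surjective_pairing.
exists (k + fingraph.order f x.1).
rewrite iter_sheet_flip iterD iter_order // y1E oddD orderE odd_face.
rewrite [LHS]surjective_pairing; congr pair.
by move: y2N; case: (y.2); case: (x.2); case: (odd k).
Qed.

End SheetFlip.

Section VoltageCover.
Variables (n : nat) (rho : {perm (arcK n)}).
Local Notation vfs := (voltage_face_succ rho (@vol_nonid n)).
Local Notation F := (face_of (face_succ rho)).

Lemma voltage_face_succ_nonidE x : vfs x = (face_succ rho x.1, ~~ x.2).
Proof. by rewrite /voltage_face_succ /vol_nonid addbT. Qed.

Lemma voltage_face_succ_inj : injective vfs.
Proof. exact: sheet_flip_inj (@face_succ_inj n rho) voltage_face_succ_nonidE. Qed.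

Hypotheses (rot : rotation_system rho) (self_dual_rho : self_dual rho).
Hypothesis odd_face : odd n.-1.

Lemma face_of_voltage x : face_of vfs x = [set y | y.1 \in F x.1].
Proof.
apply: face_of_sheet_flip; first exact: face_succ_inj.
  exact: voltage_face_succ_nonidE.
by rewrite card_face_of.
Qed.

Lemma card_face_of_voltage x : #|face_of vfs x| = (2 * n.-1)%N.
Proof. by rewrite face_of_voltage card_pred_fst cardsE card_face_of. Qed.

End VoltageCover.

Lemma mul_if0 (R : pzSemiRingType) (b1 b2 : bool) (x y : R) :
  (if b1 then x else 0) * (if b2 then y else 0) = if b1 && b2 then x * y else 0.
Proof. by case: b1; case: b2; rewrite ?mulr0 ?mul0r. Qed.

Section FunMatrix.
Variables (R : pzRingType) (A : finType).

Definition fun_mx (g : A -> A -> R) : 'M[R]_#|{: A}| :=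
  \matrix_(i, j) g (enum_val i) (enum_val j).

Lemma sum_enum_val (F : A -> R) : \sum_(k < #|{: A}|) F (enum_val k) = \sum_z F z.
Proof. by rewrite -(big_enum_val (A := predT) F); apply: eq_bigl. Qed.

Lemma mul_fun_mx g h :
  fun_mx g *m fun_mx h = fun_mx (fun x y => \sum_z g x z * h z y).
Proof.
apply/matrixP => i j; rewrite !mxE -sum_enum_val.
by apply: eq_bigr => k _; rewrite !mxE.
Qed.

Lemma tr_fun_mx g : (fun_mx g)^T = fun_mx (fun x y => g y x).
Proof. by apply/matrixP => i j; rewrite !mxE. Qed.

Lemma eq_fun_mx g h : g =2 h -> fun_mx g = fun_mx h.
Proof. by move=> gh; apply/matrixP => i j; rewrite !mxE gh. Qed.

Lemma fun_mxD g h : fun_mx g + fun_mx h = fun_mx (fun x y => g x y + h x y).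
Proof. by apply/matrixP => i j; rewrite !mxE. Qed.

Lemma fun_mxB g h : fun_mx g - fun_mx h = fun_mx (fun x y => g x y - h x y).
Proof. by apply/matrixP => i j; rewrite !mxE. Qed.

Lemma fun_mxZ a g : a *: fun_mx g = fun_mx (fun x y => a * g x y).
Proof. by apply/matrixP => i j; rewrite !mxE. Qed.

Lemma sumr_if_card (P : pred A) (k : R) :
  \sum_z (if P z then k else 0) = #|[set z | P z]|%:R * k.
Proof.
by rewrite -big_mkcond /= mulr_natl -sumr_const; apply: eq_bigl => z; rewrite inE.
Qed.

End FunMatrix.

Section ClassProjection.
Variables (R : numFieldType) (A : finType).

Definition class_proj (K : eqType) (c : A -> K) : 'M[R]_#|{: A}| :=
  fun_mx (fun x y => if c x == c y then #|[set z | c z == c x]|%:R^-1 else 0).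

Lemma class_proj_tr (K : eqType) (c : A -> K) : (class_proj c)^T = class_proj c.
Proof.
rewrite tr_fun_mx; apply: eq_fun_mx => x y; rewrite eq_sym.
by case: eqP => // ->.
Qed.

Lemma class_projE (K : eqType) (c : A -> K) s :
  (forall x, #|[set z | c z == c x]| = s) ->
  class_proj c = fun_mx (fun x y => if c x == c y then s%:R^-1 else 0).
Proof. by move=> cardc; apply: eq_fun_mx => x y; rewrite cardc. Qed.

Lemma class_proj_refine (K K' : eqType) (c : A -> K) (c' : A -> K') :
  (forall x y, c x = c y -> c' x = c' y) ->
  class_proj c *m class_proj c' = class_proj c'.
Proof.
move=> c_refines; rewrite mul_fun_mx; apply: eq_fun_mx => x y.
pose v := if c' x == c' y then #|[set z | c' z == c' x]|%:R^-1 else 0 : R.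
rewrite (eq_bigr (fun z =>
  if c z == c x then #|[set z | c z == c x]|%:R^-1 * v else 0)).
  rewrite sumr_if_card mulVKf // pnatr_eq0 -lt0n.
  by apply/card_gt0P; exists x; rewrite inE.
move=> z _; rewrite [c z == _]eq_sym; case: eqP; rewrite ?mul0r // => /c_refines c'xz.
by rewrite -c'xz.
Qed.

End ClassProjection.

Section NormalizedIncidence.
Variables (R : realType) (A K : finType) (m : nat) (e : 'I_m -> K) (c : A -> K).
Hypotheses (e_inj : injective e) (c_in_e : forall x, exists j, c x = e j).

Lemma gram_col_normalize_class :
  let X := \matrix_(i < #|{: A}|, j < m) ((c (enum_val i) == e j) : nat)%:R in
  col_normalize X *m (col_normalize X)^T = class_proj R c.
Proof.
move=> X; apply/matrixP => i j; rewrite !mxE.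
set x := enum_val i; set y := enum_val j.
have normE l : \sum_(k < #|{: A}|) X k l ^+ 2 = #|[set z | c z == e l]|%:R.
  under eq_bigr => k _ do rewrite mxE.
  rewrite (sum_enum_val (fun z => ((c z == e l) : nat)%:R ^+ 2)).
  rewrite (eq_bigr (fun z => if c z == e l then 1 else 0)) ?sumr_if_card ?mulr1 //.
  by move=> z _; case: (c z == e l); rewrite ?expr0n ?expr1n.
under eq_bigr => l _ do rewrite !mxE normE.
have [l0 cxE] := c_in_e x.
rewrite (bigD1 l0) //= big1 ?addr0 => [|l nel].
  have := sqr_sqrtr (ler0n R #|[set z | c z == e l0]|).
  set s := Num.sqrt _ => ss.
  rewrite -cxE eqxx [c y == c x]eq_sym.
  case: (c x == c y) => /=; last by rewrite mul0r mulr0.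
  by rewrite !mul1r -invfM -expr2 ss cxE.
by rewrite -/x cxE (inj_eq e_inj) eq_sym (negbTE nel) !mul0r.
Qed.

End NormalizedIncidence.

Lemma transition_mxE (R : realType) (A V : finType) (tl : A -> V) (f : A -> A) :
  injective f ->
  transition_mx R tl f =
  (2%:R *: class_proj R (face_of f) - 1%:M) *m (2%:R *: class_proj R tl - 1%:M).
Proof.
move=> injf; have faceE : arc_face_mx R f =
    \matrix_(i, j) ((face_of f (enum_val i) == enum_val j) : nat)%:R.
  by apply/matrixP => i j; rewrite !mxE (mem_faces injf _ (enum_valP j)) eq_sym.
rewrite /transition_mx faceE !gram_col_normalize_class //; try exact: enum_val_inj.
  by move=> x; exists (enum_rank (tl x)); rewrite enum_rankK.
move=> x; have facex := face_of_in_faces f x.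
by exists (enum_rank_in facex (face_of f x)); rewrite enum_rankK_in.
Qed.

Definition reflection (R : pzRingType) N (P : 'M[R]_N) : 'M[R]_N := 2%:R *: P - 1%:M.

Lemma reflection_tr (R : pzRingType) N (P : 'M[R]_N) :
  P^T = P -> (reflection P)^T = reflection P.
Proof. by move=> sym_P; rewrite /reflection linearB linearZ /= sym_P trmx1. Qed.

Section TwoProjections.
Variables (R : comPzRingType) (N : nat) (P Q E : 'M[R]_N) (a : R).
Hypotheses (PP : P *m P = P) (QQ : Q *m Q = Q)
  (PE : P *m E = E) (EP : E *m P = E) (QE : Q *m E = E) (EQ : E *m Q = E)
  (PQP : P *m Q *m P = a *: P + (1 - a) *: E).

Let mulmx_left (B C D : 'M[R]_N) :
  B *m C = D -> forall M : 'M[R]_N, M *m B *m C = M *m D.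
Proof. by move=> BCD M; rewrite -mulmxA BCD. Qed.
Let PQP_left (M : 'M[R]_N) : M *m P *m Q *m P = M *m (a *: P + (1 - a) *: E).
Proof. by rewrite -!mulmxA (mulmxA P) PQP. Qed.
Let PP_left := mulmx_left PP.
Let QQ_left := mulmx_left QQ.
Let PE_left := mulmx_left PE.
Let EP_left := mulmx_left EP.
Let QE_left := mulmx_left QE.
Let EQ_left := mulmx_left EQ.

Local Ltac reduce := repeat first
  [ rewrite mulmxDl | rewrite mulmxDr | rewrite mulmxBl | rewrite mulmxBr
  | rewrite mulNmx | rewrite mulmxN | rewrite mul1mx | rewrite mulmx1
  | rewrite mulmxA | rewrite scalerA | rewrite scalerDr | rewrite scalerBr
  | rewrite scalerN | rewrite scaleNr | rewrite -scalemxAl | rewrite -scalemxAr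
  | rewrite PQP | rewrite PQP_left | rewrite PP | rewrite PP_left
  | rewrite QQ | rewrite QQ_left | rewrite PE | rewrite PE_left
  | rewrite EP | rewrite EP_left | rewrite QE | rewrite QE_left
  | rewrite EQ | rewrite EQ_left ].

Local Notation X := (reflection P).
Local Notation Y := (reflection Q).
Local Notation K := (P *m Q - Q *m P).

Lemma reflection_word_skew :
  X *m Y *m X *m Y - Y *m X *m Y *m X = (16%:R * a - 8%:R) *: K.
Proof. by rewrite /reflection; reduce; apply/matrixP => i j; rewrite !mxE; ring. Qed.

Lemma reflection_word_sym :
  X *m Y *m X *m Y + Y *m X *m Y *m X = 16%:R *: (K *m K) + 2%:R *: 1%:M.
Proof. by rewrite /reflection; reduce; apply/matrixP => i j; rewrite !mxE; ring. Qed.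

Lemma proj_commutator_cube : K *m K *m K = - (a * (1 - a)) *: K.
Proof. by reduce; apply/matrixP => i j; rewrite !mxE; ring. Qed.

End TwoProjections.

Section SpectralCalculus.
Variables (R : realType) (N p : nat) (F : 'I_p -> 'M[R[i]]_N).
Hypotheses (F_neq0 : forall r, F r != 0)
  (F_orth : forall r s, F r *m F s = if r == s then F r else 0)
  (F_sum : \sum_(r < p) F r = 1%:M).

Definition spec_mx (d : 'I_p -> R[i]) : 'M[R[i]]_N := \sum_(r < p) d r *: F r.

Lemma spec_mx_mulF d s : spec_mx d *m F s = d s *: F s.
Proof.
rewrite /spec_mx mulmx_suml (bigD1 s) //= -scalemxAl F_orth eqxx big1 ?addr0 //.
by move=> r /negbTE rs; rewrite -scalemxAl F_orth rs scaler0.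
Qed.

Lemma spec_mx_inj d d' : spec_mx d = spec_mx d' -> d =1 d'.
Proof.
move=> dd' s; apply/eqP; have := spec_mx_mulF d s.
rewrite dd' spec_mx_mulF => /eqP; rewrite -subr_eq0 -scalerBl scalemx_eq0.
by rewrite (negbTE (F_neq0 s)) orbF subr_eq0 eq_sym.
Qed.

Lemma spec_mxM d d' : spec_mx d *m spec_mx d' = spec_mx (fun r => d r * d' r).
Proof.
rewrite [spec_mx d']/spec_mx mulmx_sumr; apply: eq_bigr => r _.
by rewrite -scalemxAr spec_mx_mulF scalerA mulrC.
Qed.

Lemma spec_mxD d d' : spec_mx d + spec_mx d' = spec_mx (fun r => d r + d' r).
Proof. by rewrite /spec_mx -big_split; apply: eq_bigr => r _; rewrite scalerDl. Qed.

Lemma spec_mxB d d' : spec_mx d - spec_mx d' = spec_mx (fun r => d r - d' r).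
Proof. by rewrite /spec_mx -sumrB; apply: eq_bigr => r _; rewrite scalerBl. Qed.

Lemma spec_mxZ k d : k *: spec_mx d = spec_mx (fun r => k * d r).
Proof. by rewrite /spec_mx scaler_sumr; apply: eq_bigr => r _; rewrite scalerA. Qed.

Lemma spec_mx1 : 1%:M = spec_mx (fun _ => 1).
Proof. by rewrite /spec_mx -F_sum; apply: eq_bigr => r _; rewrite scale1r. Qed.

Hypothesis F_herm : forall r i j, F r j i = (F r i j)^*.

Lemma spec_mx_adjoint d : map_mx conjc (spec_mx d)^T = spec_mx (fun r => (d r)^*).
Proof.
apply/matrixP => i j; rewrite !mxE !summxE rmorph_sum; apply: eq_bigr => r _.
by rewrite !mxE rmorphM /= F_herm conjcK.
Qed.

End SpectralCalculus.

Lemma angle_from_cos_cases (R : realType) (t c : R) :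
  - pi < t <= pi -> -1 < c < 1 -> (cos t = 1 \/ cos t = c) ->
  t = acos c / sin (acos c) * sin t.
Proof.
move=> /andP[t_gt t_le] /andP[c_gt c_lt] cos_t.
have sin_acos_gt0 : 0 < sin (acos c) by rewrite sin_acos ?sqrtr_gt0; nra.
have pi_gt0 : 0 < pi :> R := pi_gt0 R.
(* acos inverts cos on [0, pi]; for t < 0 apply this to -t *)
wlog t_ge0 : t t_gt t_le cos_t / 0 <= t.
  move=> wlog_t; have [|t_lt0] := lerP 0 t; first exact: wlog_t.
  rewrite -[t]opprK sinN mulrN; congr (- _); apply: wlog_t; rewrite ?cosN //; lra.
have acos_cos : acos (cos t) = t by rewrite cosK // in_itv /= t_ge0.
case: cos_t => cos_t.
  by move: acos_cos; rewrite cos_t acos1 => <-; rewrite sin0 mulr0.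
by rewrite -cos_t acos_cos divfK // -acos_cos cos_t gt_eqF.
Qed.

Lemma eigen_angle (R : realType) (t g b : R) (k : R[i]) :
  - pi < t <= pi -> g != 0 -> 0 < b < 4%:R^-1 ->
  expi t - (expi t)^* = g%:C * k ->
  expi t + (expi t)^* = (16%:R : R)%:C * (k * k) + (2%:R : R)%:C ->
  k * k * k = (- b)%:C * k ->
  'i * t%:C =
  (g / 2%:R * (acos (1 - 8%:R * b) / sin (acos (1 - 8%:R * b))))%:C * k.
Proof.
move=> t_range g_neq0 /andP[b_gt0 b_lt] diffE sumE cubeE.
case: k diffE sumE cubeE => k1 k2.
move=> /eqP; rewrite eq_complex /= => /andP[/eqP diff1 /eqP diff2].
move=> /eqP; rewrite eq_complex /= => /andP[/eqP sum1 _].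
move=> /eqP; rewrite eq_complex /= => /andP[_ /eqP cube2].
have k1_0 : k1 = 0.
  have : g * k1 = 0 by lra.
  by move/eqP; rewrite mulf_eq0 (negbTE g_neq0) => /eqP.
have k2E : k2 = 2%:R * sin t / g.
  by apply: (mulfI g_neq0); rewrite mulrCA mulfV // mulr1; rewrite k1_0 in diff2; lra.
rewrite k1_0 in sum1 cube2.
have cos_cases : cos t = 1 \/ cos t = 1 - 8%:R * b.
  have : k2 * (k2 ^+ 2 - b) = 0 by rewrite mulrBr -exprS; lra.
  by move/eqP; rewrite mulf_eq0 => /orP[] /eqP k2_eq; [left | right]; nra.
have c_range : -1 < 1 - 8%:R * b < 1 by apply/andP; split; lra.
have tE := angle_from_cos_cases t_range c_range cos_cases.
apply/eqP; rewrite eq_complex /= k1_0 k2E {1}tE !mulr0 !mul0r subr0 addr0 eqxx /=.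
have sin_neq0 : sin (acos (1 - 8%:R * b)) != 0.
  by rewrite sin_acos ?gt_eqF ?sqrtr_gt0 //; [nra | apply/andP; split; lra].
by apply/eqP; rewrite add0r mul1r {1}tE; field; rewrite g_neq0.
Qed.

Local Notation toC := (map_mx (fun x => x%:C)).

Lemma principal_hamiltonian_skew (R : realType) N (W K : 'M[R]_N) (g b : R) :
  g != 0 -> 0 < b < 4%:R^-1 ->
  W - W^T = g *: K ->
  W + W^T = 16%:R *: (K *m K) + 2%:R *: 1%:M ->
  K *m K *m K = - b *: K ->
  forall H, principal_hamiltonian (toC W) H -> exists nu : R, 'i *: H = toC (nu *: K).
Proof.
move=> g_neq0 b_range skewE symE cubeE H.
move=> [p [t [F [_ [t_range [F_neq0 [F_herm [F_orth [F_sum [WE HE]]]]]]]]]].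
pose e r := expi (t r).
pose k r := (g%:C)^-1 * (e r - (e r)^*).
have {}WE : toC W = spec_mx F e by [].
have WtE : toC W^T = spec_mx F (fun r => (e r)^*).
  rewrite -(spec_mx_adjoint F_herm) -WE.
  by apply/matrixP => i j; rewrite !mxE conjc_real.
have KE : toC K = spec_mx F k.
  have -> : K = g^-1 *: (W - W^T) by rewrite skewE scalerA mulVf ?scale1r.
  by rewrite map_mxZ map_mxB WE WtE spec_mxB spec_mxZ /= fmorphV.
have diffE r : e r - (e r)^* = g%:C * k r.
  by rewrite /k mulVKf // fmorph_eq0.
have cube_k r : k r * k r * k r = (- b)%:C * k r.
  have := congr1 toC cubeE; rewrite !map_mxM map_mxZ KE !(spec_mxM F_orth) spec_mxZ.
  by move/(spec_mx_inj F_neq0 F_orth).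
have sumE r : e r + (e r)^* = (16%:R : R)%:C * (k r * k r) + (2%:R : R)%:C.
  have := congr1 toC symE.
  rewrite map_mxD WE WtE spec_mxD map_mxD !map_mxZ map_mxM KE (spec_mxM F_orth).
  rewrite map_mx1 (spec_mx1 F_sum) !spec_mxZ spec_mxD.
  by move/(spec_mx_inj F_neq0 F_orth) => ->; rewrite mulr1.
exists (g / 2%:R * (acos (1 - 8%:R * b) / sin (acos (1 - 8%:R * b)))).
rewrite HE map_mxZ KE spec_mxZ scaler_sumr; apply: eq_bigr => r _.
rewrite scalerA; congr (_ *: _).
exact: eigen_angle (t_range r) g_neq0 b_range (diffE r) (sumE r) (cube_k r).
Qed.

Lemma inv_sqr_bounds (R : realFieldType) (m : R) : 3%:R <= m ->
  16%:R * (m * m)^-1 - 8%:R != 0 /\ 0 < (m * m)^-1 * (1 - (m * m)^-1) < 4%:R^-1.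
Proof.
move=> m_ge3; set a := (m * m)^-1.
have a_gt0 : 0 < a by rewrite invr_gt0 mulr_gt0 // (lt_le_trans _ m_ge3).
have a_le : a * 9%:R <= 1.
  have m_neq0 : m != 0 by rewrite gt_eqF // (lt_le_trans _ m_ge3).
  have am : a * (m * m) = 1 by rewrite mulVf // mulf_neq0.
  have mm_ge9 : 9%:R <= m * m by nra.
  nra.
split; first by apply/eqP; lra.
by apply/andP; split; [apply: mulr_gt0 => //; lra | nra].
Qed.

Section HDigraph.
Variables (R : realType) (n : nat) (rho : {perm (arcK n)}).
Local Notation AT := (arcK n * bool)%type.
Local Notation F := (face_of (face_succ rho)).
Local Notation vfs := (voltage_face_succ rho (@vol_nonid n)).

Definition voltage_digraph (x y : AT) : bool :=
  (tailK y.1 \in face_verts rho x.1) && (tailK x.1 \notin face_verts rho y.1).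

Hypotheses (rot : rotation_system rho) (circ : circular rho)
  (self_dual_rho : self_dual rho) (odd_face : odd n.-1).
Variable a0 : arcK n.

Let P := class_proj R (face_of vfs).
Let Q := class_proj R (@tailY n).
Let E := class_proj R (fun _ : AT => tt).
Let m : R := n.-1%:R.

Let m_gt2 : (2 < n.-1)%N := face_size_gt2 rot self_dual_rho circ a0.

Let m_ge3 : 3%:R <= m.
Proof. by rewrite ler_nat. Qed.

Let m_neq0 : m != 0. Proof. by rewrite gt_eqF // (lt_le_trans _ m_ge3). Qed.

Let natnE : n%:R = m + 1 :> R.
Proof. by rewrite /m natr1 prednK //; move: m_gt2; lia. Qed.

Let m_unit : (m != 0) && (m + 1 != 0).
Proof. by rewrite m_neq0 -natnE pnatr_eq0; move: m_gt2; lia. Qed.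

Let natn2E : n.-2%:R = m - 1 :> R.
Proof. by rewrite /m (_ : n.-1 = n.-2.+1) -?natr1 ?addrK //; move: m_gt2; lia. Qed.

Let memF a b : (b \in F a) = (a \in F b).
Proof. by rewrite !inE (fconnect_sym (@face_succ_inj n rho)). Qed.

Let P_fun : P = fun_mx (fun x y => if y.1 \in F x.1 then (2%:R * m)^-1 else 0).
Proof.
rewrite /P (class_projE R (s := (2 * n.-1)%N)) => [|x].
  apply: eq_fun_mx => x y.
  by rewrite (face_of_eqE (@voltage_face_succ_inj n rho)) face_of_voltage // inE natrM.
rewrite (eq_card (B := face_of vfs x)) ?card_face_of_voltage // => z.
by rewrite inE eq_sym (face_of_eqE (@voltage_face_succ_inj n rho)).
Qed.

Let tailY_eq (x y : AT) :
  (tailY x == tailY y) = (tailK x.1 == tailK y.1) && (x.2 == y.2).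
Proof. by rewrite /tailY xpair_eqE. Qed.

Let Q_fun : Q = fun_mx (fun x y => if tailY x == tailY y then m^-1 else 0).
Proof.
rewrite /Q (class_projE R (s := n.-1)) // => x.
rewrite -(card_arcs_from (tailK x.1)).
rewrite -(card_pred_fst_snd (fun b => tailK b == tailK x.1) x.2).
by apply: eq_card => z; rewrite !inE tailY_eq.
Qed.

Let E_fun : E = fun_mx (fun _ _ => (2%:R * (n%:R * m))^-1).
Proof.
rewrite /E (class_projE R (s := (2 * (n * n.-1))%N)) => [|x].
  by apply: eq_fun_mx => x y; rewrite eqxx !natrM.
have -> : [set z : AT | tt == tt] = setT by apply/setP => z; rewrite !inE.
by rewrite cardsT card_prod card_arcK card_bool mulnC.
Qed.

Let PQ_fun : P *m Q = fun_mx (fun x y =>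
  if tailK y.1 \in face_verts rho x.1 then (2%:R * m * m)^-1 else 0).
Proof.
rewrite P_fun Q_fun mul_fun_mx; apply: eq_fun_mx => x y.
under eq_bigr => z _ do rewrite mul_if0 tailY_eq andbA.
rewrite sumr_if_card.
rewrite (card_pred_fst_snd (fun b => (b \in F x.1) && (tailK b == tailK y.1))).
rewrite (card_face_arcs_from circ).
by case: (_ \in _); rewrite ?mul0r // mul1r -invfM.
Qed.

Let PQP : P *m Q *m P = (m * m)^-1 *: P + (1 - (m * m)^-1) *: E.
Proof.
rewrite PQ_fun P_fun E_fun mul_fun_mx !fun_mxZ fun_mxD; apply: eq_fun_mx => x y.
under eq_bigr => z _ do rewrite mul_if0 memF.
rewrite sumr_if_card.
rewrite (card_pred_fst (fun b => (tailK b \in face_verts rho x.1) && (b \in F y.1))).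
rewrite (card_face_arcs_from_verts circ) (card_face_vertsI rot self_dual_rho circ).
rewrite natrM natnE.
by case: (_ \in _); rewrite ?natn2E ?mulr0 ?add0r; field; exact: m_unit.
Qed.

Let PP : P *m P = P. Proof. exact: class_proj_refine. Qed.
Let QQ : Q *m Q = Q. Proof. exact: class_proj_refine. Qed.
Let PE : P *m E = E. Proof. exact: class_proj_refine. Qed.
Let QE : Q *m E = E. Proof. exact: class_proj_refine. Qed.
Let EP : E *m P = E. Proof. by apply: trmx_inj; rewrite trmx_mul !class_proj_tr PE. Qed.
Let EQ : E *m Q = E. Proof. by apply: trmx_inj; rewrite trmx_mul !class_proj_tr QE. Qed.

Let PQ_skew : P *m Q - Q *m P = (2%:R * m * m)^-1 *: skew_adj_mx R voltage_digraph.
Proof.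
have -> : Q *m P = (P *m Q)^T by rewrite trmx_mul !class_proj_tr.
rewrite PQ_fun tr_fun_mx fun_mxB.
apply/matrixP => i j; rewrite !mxE /voltage_digraph.
by do 2!case: (_ \in face_verts _ _) => /=;
  rewrite ?subrr ?subr0 ?sub0r ?mulr1 ?mulrN1 ?mulr0.
Qed.

Lemma voltage_H_digraph_oriented H :
  principal_hamiltonian
    (voltage_transition_mx R rho (@vol_nonid n) *m
     voltage_transition_mx R rho (@vol_nonid n)) H ->
  is_oriented_graph_mx H.
Proof.
have [g_neq0 b_range] := inv_sqr_bounds m_ge3.
rewrite /voltage_transition_mx -map_mxM transition_mxE; last first.
  exact: voltage_face_succ_inj.
rewrite -/P -/Q !mulmxA => hamH.
have [X_sym Y_sym] : (reflection P)^T = reflection P /\ (reflection Q)^T = reflection Q.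
  by split; apply: reflection_tr; exact: class_proj_tr.
have WT : (reflection P *m reflection Q *m reflection P *m reflection Q)^T =
    reflection Q *m reflection P *m reflection Q *m reflection P.
  by rewrite !trmx_mul X_sym Y_sym !mulmxA.
have skewW := reflection_word_skew PP QQ QE EQ PQP; rewrite -WT in skewW.
have symW := reflection_word_sym PP QQ QE EQ PQP; rewrite -WT in symW.
have [nu nuE] := principal_hamiltonian_skew g_neq0 b_range skewW symW
  (proj_commutator_cube PP QQ PE EP QE EQ PQP) hamH.
exists (nu * (2%:R * m * m)^-1), voltage_digraph; split.
  by move=> x y /andP[_ xy]; rewrite /voltage_digraph negb_and xy.
by rewrite nuE PQ_skew scalerA.
Qed.

End HDigraph.

Lemma is_oriented_graph_mx_card0 (R : realType) (A : finType) (H : 'M[R[i]]_#|A|) :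
  #|A| = 0%N -> is_oriented_graph_mx H.
Proof.
move=> A0; exists 0, (fun _ _ => false); split => //.
by apply/matrixP => i; have := ltn_ord i; rewrite {2}A0.
Qed.

Lemma odd_pow2_pred k : (0 < k)%N -> odd (2 ^ k).-1.
Proof. by move=> k_gt0; rewrite -subn1 oddB ?expn_gt0 // oddX /= orbF addbT -lt0n. Qed.

Theorem corollary6p4 (R : realType) (k : nat) (rho : {perm (arcK (2 ^ k))}) :
  rotation_system rho -> circular rho -> self_dual rho ->
  forall H : 'M[R[i]]_#|{: (arcK (2 ^ k)) * bool}|,
    principal_hamiltonian
      (voltage_transition_mx R rho (@vol_nonid (2 ^ k)) *m
       voltage_transition_mx R rho (@vol_nonid (2 ^ k))) H ->
    is_oriented_graph_mx H.
Proof.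
move=> rot circ self_dual_rho H.
have [k0|k_gt0] := posnP k.
  by move=> _; apply: is_oriented_graph_mx_card0; rewrite card_prod card_arcK k0.
have n_gt1 : (1 < 2 ^ k)%N by rewrite -{1}(expn0 2) ltn_exp2l.
exact: (voltage_H_digraph_oriented rot circ self_dual_rho (odd_pow2_pred k_gt0)
  (exist _ (Ordinal (ltnW n_gt1), Ordinal n_gt1) isT)).
Qed.
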